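(* Let $G$ be a finite game that is $(\lambda,\mu)$-smooth with $\mu>0$ (with respect to a fixed welfare maximizer $a^*$). Then every sink equilibrium $\sigma$ of the better-response process of $G$ has a joint action $\tilde a$ in its support with $W(\tilde a)\ge\frac{\lambda}{\mu}W(a^* )$.
   Context: A finite game $G$ consists of agents $N=\{1,\dots,n\}$, finite nonempty action sets $\mathcal A_i$, joint action set $\mathcal A=\mathcal A_1\times\cdots\times\mathcal A_n$, a welfare function $W:\mathcal A\to\mathbb R_{\ge 0}$ and utility functions $U_i:\mathcal A\to\mathbb R$, $i\in N$. For $a\in\mathcal A$, $a_{-i}$ denotes the actions of all agents other than $i$, and $(b_i,a_{-i})$ is the joint action obtained from $a$ by replacing $a_i$ with $b_i$. Fix $a^*\in\arg\max_{a\in\mathcal A}W(a)$. For $\mu\ge\lambda\ge0$, $G$ is $(\lambda,\mu)$-smooth if $\sum_{i=1}^n\big(U_i(a)-U_i(a^*_i,a_{-i})\big)\le\mu W(a)-\lambda W(a^* )$ for all $a\in\mathcal A$. The better response set of agent $i$ at $a$ is $\mathrm{br}_i(a)=\{b_i\in\mathcal A_i: U_i(b_i,a_{-i})\ge U_i(a)\}$. The better-response process is the Markov chain on $\mathcal A$ in which, from state $a$, an agent $i$ is chosen uniformly at random from $N$, then $b_i$ is chosen uniformly at random from $\mathrm{br}_i(a)$, and the next state is $(b_i,a_{-i})$. A sink strongly connected component of this chain is a nonempty set $S\subseteq\mathcal A$ such that for all $a,\bar a\in S$ there is a positive-probability path from $a$ to $\bar a$, and no state outside $S$ is reachable with positive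 probability from $S$. A sink equilibrium of the better-response process is a stationary distribution of this chain whose support equals a sink strongly connected component. *)

From HB Require Import structures.
From mathcomp Require Import all_boot all_order all_algebra.
Set Implicit Arguments. Unset Strict Implicit. Unset Printing Implicit Defensive.
Import Order.TTheory GRing.Theory Num.Theory.
Local Open Scope ring_scope.

Section Game.
Variable R : realFieldType.
Variables (I : finType) (A : I -> finType).

Definition joint := {dffun forall i : I, A i}.

Definition upd (a : joint) (i : I) (b : A i) : joint :=
  [ffun j => if @eqP _ i j is ReflectT e then ecast k (A k) e b else a j].

Arguments upd a i b : clear implicits.
Variable U : I -> joint -> R.

Definition br (i : I) (a : joint) : {set (A i)} :=
  [set b : (A i) | U i a <= U i (upd a i b)].

Definition brP (a a' : joint) : R :=
  (#|I|%:R)^-1 * \sum_(i : I)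
     (#|br i a|%:R)^-1 * \sum_(b in br i a) (upd a i b == a')%:R.

Definition step : rel joint := fun a a' => 0 < brP a a'.
Definition reach (a a' : joint) : bool := connect step a a'.

Definition sink_scc (S : {set joint}) : Prop :=
  [/\ S != set0,
      (forall a b, a \in S -> b \in S -> reach a b) &
      (forall a b, a \in S -> reach a b -> b \in S)].

Definition stationary (sigma : joint -> R) : Prop :=
  [/\ forall a, 0 <= sigma a,
      \sum_a sigma a = 1 &
      forall a', sigma a' = \sum_a sigma a * brP a a'].

Definition sink_equilibrium (sigma : joint -> R) : Prop :=
  stationary sigma /\ sink_scc [set a | sigma a != 0].

Definition smooth (W : joint -> R) (astar : joint) (lambda mu : R) : Prop :=
  [/\ 0 <= lambda, lambda <= mu &
      forall a, \sum_i (U i a - U i (upd a i (astar i))) <= mu * W a - lambda * W astar].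
End Game.

From HB Require Import structures.
From mathcomp Require Import all_boot all_order all_algebra.
Set Implicit Arguments. Unset Strict Implicit. Unset Printing Implicit Defensive.
Import Order.TTheory GRing.Theory Num.Theory.
Local Open Scope ring_scope.

(* Among the joint actions in the support of a sink equilibrium, take one, a,
   agreeing with astar in as many coordinates as possible.  If W a were below
   (lambda / mu) W astar, smoothness would make the sum of the deviation gains
   U_i (astar_i, a_-i) - U_i a positive, so some agent i strictly gains by
   switching to astar_i.  That switch is a better response, hence a
   positive-probability transition, so it stays in the sink component while
   agreeing with astar in one more coordinate: a contradiction. *)

Section UnilateralDeviation.
Variables (I : finType) (A : I -> finType).
Implicit Types (a : joint A) (i j : I).

Lemma upd_same a i (b : A i) : upd a b i = b.
Proof. by rewrite ffunE; case: eqP => // e; rewrite (eq_irrelevance e erefl). Qed.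

Lemma upd_other a i (b : A i) j : i != j -> upd a b j = a j.
Proof. by move=> nij; rewrite ffunE; case: eqP => // e; rewrite e eqxx in nij. Qed.

Lemma upd_id a i : upd a (a i) = a.
Proof.
apply/ffunP => j; have [<-|nij] := eqVneq i j; first by rewrite upd_same.
by rewrite upd_other.
Qed.

Definition agreement (a b : joint A) : nat := #|[set j | a j == b j]|.

Lemma agreement_upd_gt a (b : joint A) i :
  a i != b i -> (agreement a b < agreement (upd a (b i)) b)%N.
Proof.
move=> abi; apply: proper_card; apply/properP; split.
  apply/subsetP => j; rewrite !inE => /eqP abj.
  have [<-|nij] := eqVneq i j; first by rewrite upd_same.
  by rewrite upd_other // abj.
by exists i; rewrite !inE ?upd_same // (negbTE abi).
Qed.

End UnilateralDeviation.

Section BetterResponse.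
Variables (R : realFieldType) (I : finType) (A : I -> finType).
Variable U : I -> joint A -> R.
Implicit Types (a : joint A) (i : I).

Lemma step_better_response a i (b : A i) : b \in br U i a -> step U a (upd a b).
Proof.
move=> b_br; have I_gt0 : (0 < #|I|)%N by apply/card_gt0P; exists i.
have br_gt0 : (0 < #|br U i a|)%N by apply/card_gt0P; exists b.
rewrite /step /brP mulr_gt0 ?invr_gt0 ?ltr0n // (bigD1 i) //=.
rewrite ltr_pwDl ?sumr_ge0 // => [|j _]; last first.
  by rewrite mulr_ge0 ?invr_ge0 ?ler0n ?sumr_ge0.
rewrite mulr_gt0 ?invr_gt0 ?ltr0n // (bigD1 b) //= eqxx.
by rewrite ltr_pwDl ?ltr01 ?sumr_ge0.
Qed.

Lemma sink_scc_step (S : {set joint A}) a a' :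
  sink_scc U S -> a \in S -> step U a a' -> a' \in S.
Proof. by case=> _ _ S_closed aS /connect1; apply: S_closed. Qed.

Lemma smooth_profitable_deviation (W : joint A -> R) astar lambda mu a :
  smooth U W astar lambda mu -> 0 < mu -> W a < lambda / mu * W astar ->
  exists i, U i a < U i (upd a (astar i)).
Proof.
case=> _ _ smoothU mu_gt0 lowW.
have gains_neg : \sum_i (U i a - U i (upd a (astar i))) < 0.
  apply: le_lt_trans (smoothU a) _; rewrite subr_lt0.
  by rewrite mulrC -ltr_pdivlMr // mulrAC.
apply/existsP; apply: contraLR gains_neg; rewrite negb_exists => /forallP no_gain.
by rewrite -leNgt sumr_ge0 // => i _; rewrite subr_ge0 leNgt no_gain.
Qed.

End BetterResponse.

Theorem proposition4 (R : realFieldType) (I : finType) (A : I -> finType)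
    (W : joint A -> R) (U : I -> joint A -> R) (astar : joint A)
    (lambda mu : R) (sigma : joint A -> R) :
  (0 < #|I|)%N ->
  (forall a, 0 <= W a) ->
  (forall a, W a <= W astar) ->
  smooth U W astar lambda mu ->
  0 < mu ->
  sink_equilibrium U sigma ->
  exists at_ : joint A, sigma at_ != 0 /\ lambda / mu * W astar <= W at_.
Proof.
move=> _ _ _ smoothU mu_gt0 [_ sinkS].
set S := [set a | sigma a != 0] in sinkS.
have [Sne _ _] := sinkS; have /set0Pn[a0 a0S] := Sne.
have [a aS a_max] :=
  @arg_maxnP _ a0 (fun x => x \in S) (fun a => agreement a astar) a0S.
have [lowW|highW] := ltrP (W a) (lambda / mu * W astar);
  last by exists a; rewrite inE in aS.
have [i gain] := smooth_profitable_deviation smoothU mu_gt0 lowW.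
have ai_ne : a i != astar i by apply: contraTneq gain => <-; rewrite upd_id ltxx.
have deviation_br : astar i \in br U i a by rewrite inE ltW.
have devS := sink_scc_step sinkS aS (step_better_response deviation_br).
by have := a_max _ devS; rewrite /= leqNgt agreement_upd_gt.
Qed.
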